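(* Let $\mathfrak{X}$ be a connected complex analytic manifold with base point $z^*$ such that $H=H_1(\mathfrak{X};\mathbb{Z}_2)$ is finite, of order $2^s$, and let $k,q\ge0$. Then $\widehat{\mathcal{F}}^q_k$ coincides with the space of all $q$-forms $\theta\in\mathcal{A}^q(\widetilde{\mathfrak{X}})$ admitting a decomposition $\theta=\sum_{\rho\in H^*}\theta_\rho$ such that $\mathrm{Var}^\rho_\gamma\theta_\rho\in\widehat{\mathcal{F}}^q_{k-1}$ for all $\gamma\in\pi$ and all $\rho\in H^*$. Moreover, if $\theta\in\widehat{\mathcal{F}}^q_k$, one can take $$\theta_\rho=\frac{1}{2^s}\sum_{j=1}^{2^s}(-1)^{\rho(\gamma_j)}M_{\gamma_j}\theta,$$ where $\gamma_1=1,\gamma_2,\dots,\gamma_{2^s}\in\pi$ are representatives of all $2^s$ cosets $\pi/\hat\pi$.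
   Context: $\widetilde{\mathfrak{X}}$ is the universal covering, $\pi=\pi_1(\mathfrak{X},z^* )$ acting by deck transformations $T_\gamma$; $\mathcal{A}^q(\widetilde{\mathfrak{X}})$ is the space of holomorphic $q$-forms on $\widetilde{\mathfrak{X}}$; $M_\gamma\theta=T_\gamma^*\theta$, $\mathrm{Var}_\gamma\theta=M_\gamma\theta-\theta$. $H^*=H^1(\mathfrak{X};\mathbb{Z}_2)=\mathrm{Hom}(\pi,\mathbb{Z}_2)$. For $\rho\in H^*$ the twisted variation is $\mathrm{Var}^\rho_\gamma\theta=M_\gamma\theta-(-1)^{\rho(\gamma)}\theta$. $\hat\pi$ is the kernel of $\pi\to H$, and $\widehat{\mathcal{F}}^q_{-1}=\{0\}$, $\widehat{\mathcal{F}}^q_k=\{\theta:\mathrm{Var}_\gamma\theta\in\widehat{\mathcal{F}}^q_{k-1}\ \forall\gamma\in\hat\pi\}$. *)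

From HB Require Import structures.
From mathcomp Require Import all_boot all_order all_algebra.
Set Implicit Arguments. Unset Strict Implicit. Unset Printing Implicit Defensive.
Import GRing.Theory.
Local Open Scope ring_scope.

Section Defs.
Variables (G : Type) (mul : G -> G -> G) (one : G) (inv : G -> G).

Record is_group : Prop := IsGroup {
  grp_mulA : forall a b c, mul a (mul b c) = mul (mul a b) c;
  grp_mul1g : forall a, mul one a = a;
  grp_mulg1 : forall a, mul a one = a;
  grp_mulVg : forall a, mul (inv a) a = one;
  grp_mulgV : forall a, mul a (inv a) = one }.

(* pihat = kernel of pi -> H_1(X;Z_2) = subgroup generated by squares and
   commutators *)
Inductive pihat : G -> Prop :=
| pihat_sq a : pihat (mul a a)
| pihat_comm a b : pihat (mul (mul (inv a) (inv b)) (mul a b))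
| pihat_one : pihat one
| pihat_mul a b : pihat a -> pihat b -> pihat (mul a b)
| pihat_inv a : pihat a -> pihat (inv a).

(* elements of H^* = Hom(pi, Z_2), Z_2 = bool with xor *)
Definition is_hom2 (rho : G -> bool) : Prop :=
  forall a b, rho (mul a b) = addb (rho a) (rho b).

Variables (F : fieldType) (V : lmodType F) (M : G -> V -> V).

(* M_gamma = T_gamma^* : linear, M_1 = id, M_{gamma delta} = M_delta o M_gamma
   (pullback is contravariant, T_{gamma delta} = T_gamma o T_delta) *)
Definition is_pullback_rep : Prop :=
  [/\ forall g (a : F) (u v : V), M g (a *: u + v) = a *: M g u + M g v,
      forall u, M one u = u
    & forall a b u, M (mul a b) u = M b (M a u)].

Definition Var (g : G) (th : V) : V := M g th - th.

Definition TVar (rho : G -> bool) (g : G) (th : V) : V :=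
  M g th - ((-1) ^+ rho g) *: th.

(* Fm1 n = \widehat{F}_{n-1}; Fm1 0 = \widehat{F}_{-1} = {0} *)
Fixpoint Fm1 (n : nat) (th : V) : Prop :=
  match n with
  | 0 => th = 0
  | n'.+1 => forall g, pihat g -> Fm1 n' (Var g th)
  end.

Definition Fhat (k : nat) (th : V) : Prop := Fm1 k.+1 th.

End Defs.

(* The averages theta_rho = 2^-s sum_j (-1)^rho(gamma_j) M_{gamma_j} theta are the
   isotypic projections of theta for the finite Boolean group pi/pihat, which acts
   on theta modulo Fhat_{k-1}.  Their sum is theta by the orthogonality relations
   for the characters of pi/pihat (the dual orthogonality needs that characters
   separate points, and a maximal subgroup avoiding a given element has index 2).
   Applying M_g to theta_rho permutes the cosets, and what is left over is a
   combination of terms M_gamma (Var_h theta) with h in pihat; these lie in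
   Fhat_{k-1}, a subspace stable under every M_gamma because pihat is normal.
   Conversely every character is trivial on pihat, so Var_h of a sum of twisted
   eigenvectors modulo Fhat_{k-1} lies in Fhat_{k-1}. *)

From HB Require Import structures.
From mathcomp Require Import all_boot all_order all_algebra.
From Stdlib Require Import ClassicalEpsilon Classical.
Import GRing.Theory.
Local Open Scope ring_scope.

Section BooleanGroupCharacters.
Context {Q : finType} {op : Q -> Q -> Q} {z : Q}.
Hypotheses (opA : forall a b c, op a (op b c) = op (op a b) c)
  (opC : forall a b, op a b = op b a) (op0 : forall a, op z a = a)
  (opK : forall a, op a a = z).

Let opKl u t : op u (op u t) = t. Proof. by rewrite opA opK op0. Qed.

Let opAC u t t' : op (op u t) t' = op t (op u t').
Proof. by rewrite (opC u) -opA. Qed.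

Context {x : Q}.

Definition subgroup_avoiding (S : {set Q}) : bool :=
  [&& z \in S, [forall a, forall b, (a \in S) ==> (b \in S) ==> (op a b \in S)]
    & x \notin S].

Lemma subgroup_avoidingM {S} :
  subgroup_avoiding S -> forall a b, a \in S -> b \in S -> op a b \in S.
Proof.
case/and3P=> _ /forallP clS _ a b aS bS.
by move: (clS a) => /forallP/(_ b); rewrite aS bS.
Qed.

(* Otherwise S and yS would span a larger subgroup still avoiding x. *)
Lemma max_subgroup_avoiding_cover {S} :
    subgroup_avoiding S ->
    (forall S', subgroup_avoiding S' -> #|S'| <= #|S|)%N ->
  forall y, y \notin S -> exists2 t, t \in S & y = op x t.
Proof.
move=> avS maxS y yS; have /and3P[zS _ xS] := avS.
have cl := subgroup_avoidingM avS.
pose S' := S :|: [set op y t | t in S].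
case xS': (x \in S').
  move: xS'; rewrite in_setU (negbTE xS) /= => /imsetP[t tS ->].
  by exists t; rewrite // -opA opK opC op0.
have avS' : subgroup_avoiding S'.
  rewrite /subgroup_avoiding xS' andbT in_setU zS /=.
  apply/forallP=> a; apply/forallP=> b; apply/implyP=> aS'; apply/implyP.
  move: aS'; rewrite !in_setU => /orP[aS|/imsetP[t tS ->]]
                               /orP[bS|/imsetP[t' t'S ->]].
  - by rewrite cl.
  - by rewrite opA (opC a) -opA imset_f ?orbT ?cl.
  - by rewrite -opA imset_f ?orbT ?cl.
  - by rewrite opAC opKl cl.
have ltSS' : S \proper S'.
  apply/properP; split; first exact: subsetUl.
  exists y => //; rewrite in_setU; apply/orP; right; apply/imsetP.
  by exists z => //; rewrite opC op0.
by move: (maxS S' avS'); rewrite leqNgt proper_card.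
Qed.

Lemma boolean_group_separates :
  x != z -> exists f : Q -> bool, {morph f : a b / op a b >-> a (+) b} /\ f x.
Proof.
move=> xz.
have av1 : subgroup_avoiding [set z].
  rewrite /subgroup_avoiding set11 in_set1 xz andbT /=.
  apply/forallP=> a; apply/forallP=> b; rewrite !in_set1.
  by apply/implyP=> /eqP->; apply/implyP=> /eqP->; rewrite op0.
case: (@arg_maxnP _ [set z] subgroup_avoiding (fun S => #|S|) av1) => S avS maxS.
have /and3P[_ _ xS] := avS; have cl := subgroup_avoidingM avS.
have cover := max_subgroup_avoiding_cover avS maxS.
have cl_cancel u v : u \in S -> op u v \in S -> v \in S.
  by move=> uS uvS; rewrite -(opKl u v) cl.
exists (fun a => a \notin S); split=> // a b.
case aS: (a \in S); case bS: (b \in S) => /=.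
- by rewrite cl.
- have [t tS ->] := cover b (negbT bS).
  apply/negP; rewrite opA (opC a) -opA opC => /(cl_cancel _ _ (cl _ _ aS tS)).
  exact/negP.
- have [t tS ->] := cover a (negbT aS).
  apply/negP; rewrite -opA opC => /(cl_cancel _ _ (cl _ _ tS bS)).
  exact/negP.
- have [t tS ->] := cover a (negbT aS); have [t' t'S ->] := cover b (negbT bS).
  by rewrite opAC opKl cl.
Qed.

End BooleanGroupCharacters.

Lemma sum_sign_flip_eq0 {F : fieldType} {I : finType} {f : I -> bool}
    {t : I -> I} :
    (2%:R : F) != 0 -> injective t -> (forall i, f (t i) = ~~ f i) ->
  \sum_i ((-1) ^+ f i : F) = 0.
Proof.
move=> two_neq0 tinj ft.
have e : \sum_i ((-1) ^+ f i : F) = - \sum_i ((-1) ^+ f i : F).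
  rewrite {1}(reindex_inj tinj) -sumrN; apply: eq_bigr => i _.
  by rewrite ft; case: (f i); rewrite /= ?opprK ?expr0 ?expr1.
apply/eqP; move/eqP: e; rewrite -subr_eq0 opprK -mulr2n -mulr_natl mulf_eq0.
by rewrite (negbTE two_neq0).
Qed.

Section FundamentalGroup.
Context {G : Type} {mul : G -> G -> G} {one : G} {inv : G -> G}.
Hypothesis HG : is_group mul one inv.
Local Notation pihat := (pihat mul one inv).

Let mulA a b c : mul a (mul b c) = mul (mul a b) c. Proof. by case: HG. Qed.
Let mul1g a : mul one a = a. Proof. by case: HG. Qed.
Let mulg1 a : mul a one = a. Proof. by case: HG. Qed.
Let mulVg a : mul (inv a) a = one. Proof. by case: HG. Qed.
Let mulgV a : mul a (inv a) = one. Proof. by case: HG. Qed.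

Lemma grp_mulKg a b : mul (inv a) (mul a b) = b.
Proof. by rewrite mulA mulVg mul1g. Qed.

Lemma grp_mulKVg a b : mul a (mul (inv a) b) = b.
Proof. by rewrite mulA mulgV mul1g. Qed.

Lemma grp_mulgKV a b : mul (mul b (inv a)) a = b.
Proof. by rewrite -mulA mulVg mulg1. Qed.

Lemma grp_invK a : inv (inv a) = a.
Proof. by rewrite -[inv (inv a)]mulg1 -(mulVg a) mulA mulVg mul1g. Qed.

Lemma grp_invM a b : inv (mul a b) = mul (inv b) (inv a).
Proof.
have e : mul (mul a b) (mul (inv b) (inv a)) = one.
  by rewrite -mulA grp_mulKVg mulgV.
by rewrite -[inv (mul a b)]mulg1 -e grp_mulKg.
Qed.

Lemma grp_inv1 : inv one = one. Proof. by rewrite -[inv one]mulg1 mulVg. Qed.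

Lemma pihat_conj x c : pihat x -> pihat (mul (mul c x) (inv c)).
Proof.
move=> px.
have -> : mul (mul c x) (inv c) =
          mul x (mul (mul (inv x) (inv (inv c))) (mul x (inv c))).
  by rewrite grp_invK mulA grp_mulKVg mulA.
exact/pihat_mul/pihat_comm.
Qed.

Lemma pihat_commute a b : pihat (mul (mul a b) (inv (mul b a))).
Proof.
have -> : mul (mul a b) (inv (mul b a)) =
          mul (mul (inv (inv a)) (inv (inv b))) (mul (inv a) (inv b)).
  by rewrite !grp_invK grp_invM.
exact: pihat_comm.
Qed.

Section Hom2.
Context {rho : G -> bool} (rho_hom : is_hom2 mul rho).

Lemma hom2_one : rho one = false.
Proof. by have := rho_hom one one; rewrite mulg1 addbb. Qed.

Lemma hom2_inv a : rho (inv a) = rho a.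
Proof.
have := rho_hom a (inv a); rewrite mulgV hom2_one.
by case: (rho a); case: (rho (inv a)).
Qed.

Lemma hom2_pihat {x} : pihat x -> rho x = false.
Proof.
elim=> {x} [a | a b | | a b _ Ha _ Hb | a _ IH].
- by rewrite rho_hom addbb.
- by rewrite !rho_hom !hom2_inv; case: (rho a); case: (rho b).
- exact: hom2_one.
- by rewrite rho_hom Ha Hb.
- by rewrite hom2_inv.
Qed.

End Hom2.

Context {N : nat} {gam : 'I_N -> G}
  (gam_cosets : forall g : G, exists! j : 'I_N, pihat (mul g (inv (gam j)))).

Definition coset_index (g : G) : 'I_N :=
  proj1_sig (constructive_indefinite_description _ (gam_cosets g)).

Lemma coset_indexP g : pihat (mul g (inv (gam (coset_index g)))).
Proof.
by rewrite /coset_index; case: constructive_indefinite_description => ? [].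
Qed.

Lemma coset_index_uniq g j : pihat (mul g (inv (gam j))) -> coset_index g = j.
Proof.
rewrite /coset_index.
by case: constructive_indefinite_description => j' [_ /= uniq] /uniq.
Qed.

Lemma coset_index_gam j : coset_index (gam j) = j.
Proof. by apply: coset_index_uniq; rewrite mulgV; apply: pihat_one. Qed.

Lemma coset_index_eq a b :
  pihat (mul a (inv b)) -> coset_index a = coset_index b.
Proof.
move=> h; apply: coset_index_uniq.
have -> : mul a (inv (gam (coset_index b))) =
          mul (mul a (inv b)) (mul b (inv (gam (coset_index b)))).
  by rewrite mulA grp_mulgKV.
exact/pihat_mul/coset_indexP.
Qed.

Lemma coset_index_eqP a b :
  coset_index a = coset_index b -> pihat (mul a (inv b)).
Proof.
move=> e.
have -> : mul a (inv b) = mul (mul a (inv (gam (coset_index a))))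
                              (inv (mul b (inv (gam (coset_index b))))).
  by rewrite e grp_invM grp_invK mulA grp_mulgKV.
exact/pihat_mul/pihat_inv/coset_indexP/coset_indexP.
Qed.

Definition coset_mul (i j : 'I_N) : 'I_N := coset_index (mul (gam i) (gam j)).

Lemma coset_indexM a b :
  coset_index (mul a b) = coset_mul (coset_index a) (coset_index b).
Proof.
apply: coset_index_eq.
set x := mul a (inv (gam (coset_index a))).
set y := mul b (inv (gam (coset_index b))).
have -> : mul (mul a b) (inv (mul (gam (coset_index a)) (gam (coset_index b)))) =
          mul (mul (mul a y) (inv a)) x.
  by rewrite /x /y -(mulA _ (inv a)) grp_mulKg grp_invM !mulA.
exact/pihat_mul/coset_indexP/pihat_conj/coset_indexP.
Qed.

Lemma coset_mulA a b c : coset_mul a (coset_mul b c) = coset_mul (coset_mul a b) c.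
Proof.
have -> : coset_mul a (coset_mul b c) =
          coset_index (mul (gam a) (mul (gam b) (gam c))).
  by rewrite coset_indexM coset_index_gam.
have -> : coset_mul (coset_mul a b) c =
          coset_index (mul (mul (gam a) (gam b)) (gam c)).
  by rewrite coset_indexM coset_index_gam.
by rewrite mulA.
Qed.

Lemma coset_mulC a b : coset_mul a b = coset_mul b a.
Proof. exact/coset_index_eq/pihat_commute. Qed.

Lemma coset_mul1 a : coset_mul (coset_index one) a = a.
Proof. by rewrite -{1}(coset_index_gam a) -coset_indexM mul1g coset_index_gam. Qed.

Lemma coset_mulK a : coset_mul a a = coset_index one.
Proof. by apply: coset_index_eq; rewrite grp_inv1 mulg1; apply: pihat_sq. Qed.

Lemma hom2_separates a :
  ~ pihat a -> exists rho : G -> bool, is_hom2 mul rho /\ rho a.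
Proof.
move=> na.
have a_neq1 : coset_index a != coset_index one.
  by apply/eqP=> /coset_index_eqP; rewrite grp_inv1 mulg1.
have [f [fM fa]] :=
  boolean_group_separates coset_mulA coset_mulC coset_mul1 coset_mulK a_neq1.
by exists (fun g => f (coset_index g)); split=> // u v; rewrite coset_indexM fM.
Qed.

Lemma hom2_coset_index (rho : G -> bool) a :
  is_hom2 mul rho -> rho (gam (coset_index a)) = rho a.
Proof.
move=> h; have := hom2_pihat h (coset_indexP a); rewrite h hom2_inv //.
by case: (rho a); case: (rho (gam (coset_index a))).
Qed.

Lemma coset_index_mulr_inj g : injective (fun j => coset_index (mul (gam j) g)).
Proof.
move=> j j' /= /coset_index_eqP; rewrite grp_invM -mulA grp_mulKVg.
by move/coset_index_eq; rewrite !coset_index_gam.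
Qed.

Context {F : fieldType} (two_neq0 : (2%:R : F) != 0).
Context {n : nat} {E : 'I_n -> G -> bool}
  (E_hom : forall i, is_hom2 mul (E i))
  (E_enum : forall rho : G -> bool, is_hom2 mul rho ->
      exists! i : 'I_n, forall g, E i g = rho g).
Context {j0 : 'I_N} (gam_j0 : gam j0 = one).

Lemma sum_nontrivial_character i : (exists h, E i h) ->
  \sum_(j < N) ((-1) ^+ E i (gam j) : F) = 0.
Proof.
case=> h Eh; apply: (sum_sign_flip_eq0 two_neq0 (coset_index_mulr_inj h)) => j.
by rewrite hom2_coset_index // E_hom Eh addbT.
Qed.

(* Multiplying by a character separating gam j permutes the characters. *)
Lemma sum_characters_at_nontrivial j :
  j != j0 -> \sum_(i < n) ((-1) ^+ E i (gam j) : F) = 0.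
Proof.
move=> jj0.
have [rho [rho_hom rho_j]] : exists rho, is_hom2 mul rho /\ rho (gam j).
  apply: hom2_separates => pj; move/eqP: jj0; apply.
  rewrite -(coset_index_gam j); apply: coset_index_uniq.
  by rewrite gam_j0 grp_inv1 mulg1.
have twist i : {i' | forall g, E i' g = E i g (+) rho g}.
  apply: constructive_indefinite_description.
  have [i' [Hi' _]] : exists! i' : 'I_n, forall g, E i' g = E i g (+) rho g.
    by apply: E_enum => a b; rewrite E_hom rho_hom addbACA.
  by exists i'.
have twist_inj : injective (fun i => sval (twist i)).
  move=> i i' e; have [i2 [_ U]] := E_enum _ (E_hom i).
  rewrite -(U i) // -(U i') // => g.
  by apply: (@addIb (rho g)); rewrite -(svalP (twist i)) -(svalP (twist i')) e.
apply: (sum_sign_flip_eq0 two_neq0 twist_inj) => i.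
by rewrite (svalP (twist i)) rho_j addbT.
Qed.

Lemma sum_characters_at1 : \sum_(i < n) ((-1) ^+ E i one : F) = n%:R.
Proof.
rewrite (eq_bigr (fun _ => 1)) ?sumr_const ?card_ord // => i _.
by rewrite hom2_one.
Qed.

(* Both sides count the sum of all entries of the character table of pi/pihat. *)
Lemma card_characters : (n%:R : F) = N%:R.
Proof.
have [i1 [i1_triv i1_uniq]] := E_enum (fun _ => false) (fun a b => erefl).
have e : \sum_(j < N) \sum_(i < n) ((-1) ^+ E i (gam j) : F) =
          \sum_(i < n) \sum_(j < N) ((-1) ^+ E i (gam j) : F).
  exact: exchange_big.
rewrite (bigD1 j0) //= [X in _ + X]big1 ?addr0 in e; last first.
  by move=> j; apply: sum_characters_at_nontrivial.
rewrite [X in _ = X](bigD1 i1) //= [X in _ = _ + X]big1 ?addr0 in e; last first.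
  move=> i i_neq1; apply: sum_nontrivial_character; apply: NNPP => no_h.
  move/eqP: i_neq1; apply; apply/esym/i1_uniq => g.
  by apply/negP => Eg; apply: no_h; exists g.
rewrite gam_j0 sum_characters_at1 in e; rewrite e.
by rewrite (eq_bigr (fun _ => 1)) ?sumr_const ?card_ord // => j _; rewrite i1_triv.
Qed.

Context {V : lmodType F} {M : G -> V -> V}.
Hypothesis HM : is_pullback_rep mul one M.

Let M1 u : M one u = u. Proof. by case: HM. Qed.
Let Mmul a b u : M (mul a b) u = M b (M a u). Proof. by case: HM. Qed.

Let M_linear g : linear (M g).
Proof. by case: HM => Mlin _ _ a u v; rewrite Mlin. Qed.

HB.instance Definition _ g :=
  GRing.isLinear.Build F V V *:%R (M g) (M_linear g).

Local Notation W := (Fm1 mul one inv M).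

Lemma Fm1_0 m : W m 0.
Proof. by elim: m => [|m IH] //= g _; rewrite /Var linear0 subr0. Qed.

Lemma Fm1D m u v : W m u -> W m v -> W m (u + v).
Proof.
elim: m u v => [|m IH] u v /=; first by move=> -> ->; rewrite addr0.
move=> Hu Hv g pg; rewrite /Var linearD opprD addrACA.
exact: IH (Hu g pg) (Hv g pg).
Qed.

Lemma Fm1Z m a u : W m u -> W m (a *: u).
Proof.
elim: m u => [|m IH] u /=; first by move=> ->; rewrite scaler0.
by move=> Hu g pg; rewrite /Var linearZ -scalerBr; apply/IH/Hu.
Qed.

Lemma Fm1_sum m (I : finType) (f : I -> V) :
  (forall i, W m (f i)) -> W m (\sum_i f i).
Proof. by move=> H; apply: (big_ind (W m)) => //; [exact: Fm1_0 | exact: Fm1D]. Qed.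

(* Var_g (M_c u) = M_c (Var_{c g c^-1} u), and pihat is normal. *)
Lemma Fm1_pullback m c u : W m u -> W m (M c u).
Proof.
elim: m c u => [|m IH] c u /=; first by move=> ->; rewrite linear0.
move=> Hu g pg.
have -> : Var M g (M c u) = M c (Var M (mul (mul c g) (inv c)) u).
  by rewrite /Var linearB /= -!Mmul grp_mulgKV.
exact/IH/Hu/pihat_conj.
Qed.

(* A character is trivial on pihat, so there Var_h = TVar_h. *)
Lemma Fm1_of_twisted_decomposition k (ths : 'I_n -> V) :
  (forall i g, W k (TVar M (E i) g (ths i))) -> W k.+1 (\sum_(i < n) ths i).
Proof.
move=> Wths h ph_h; rewrite /Var linear_sum -sumrB; apply: Fm1_sum => i.
by have := Wths i h; rewrite /TVar (hom2_pihat (E_hom i) ph_h) expr0 scale1r.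
Qed.

Definition isotypic_part (i : 'I_n) (th : V) : V :=
  (N%:R : F)^-1 *: \sum_(j < N) ((-1) ^+ E i (gam j) *: M (gam j) th).

Hypothesis N_neq0 : (N%:R : F) != 0.

Lemma sum_isotypic_parts th : \sum_(i < n) isotypic_part i th = th.
Proof.
rewrite -scaler_sumr exchange_big /=.
under eq_bigr do rewrite -scaler_suml.
rewrite (bigD1 j0) //= [X in _ + X]big1 ?addr0; last first.
  by move=> j jj0; rewrite sum_characters_at_nontrivial ?scale0r.
by rewrite gam_j0 M1 sum_characters_at1 card_characters scalerA mulVf ?scale1r.
Qed.

(* M_g M_{gam j} = M_{gam j'} M_h, where j' is the coset of gam j g and
   h = gam j g gam_{j'}^-1 lies in pihat; j |-> j' is a permutation. *)
Lemma TVar_isotypic_part i g th :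
  TVar M (E i) g (isotypic_part i th) =
  (N%:R : F)^-1 *: \sum_(j < N) (-1) ^+ E i (gam j) *:
     M (gam (coset_index (mul (gam j) g)))
       (Var M (mul (mul (gam j) g) (inv (gam (coset_index (mul (gam j) g))))) th).
Proof.
pose j' j := coset_index (mul (gam j) g).
have sign_j' j : (-1) ^+ E i (gam j) = (-1) ^+ E i g * (-1) ^+ E i (gam (j' j)) :> F.
  by rewrite -signr_addb hom2_coset_index // E_hom addbC addbK.
have Mg_gam j : M g (M (gam j) th) = M (gam (j' j))
   (Var M (mul (mul (gam j) g) (inv (gam (j' j)))) th) + M (gam (j' j)) th.
  by rewrite /Var linearB /= subrK -!Mmul grp_mulgKV.
have reindex : \sum_(j < N) (-1) ^+ E i (gam (j' j)) *: M (gam (j' j)) th =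
               \sum_(j < N) (-1) ^+ E i (gam j) *: M (gam j) th.
  by rewrite [RHS](reindex_inj (coset_index_mulr_inj g)).
rewrite /TVar /isotypic_part linearZ linear_sum /=.
under eq_bigr => j _ do rewrite linearZ /= Mg_gam scalerDr {2}sign_j' -scalerA.
by rewrite big_split /= -scaler_sumr reindex scalerDr scalerA mulrC -scalerA addrK.
Qed.

Lemma TVar_isotypic_part_Fm1 k th i g :
  W k.+1 th -> W k (TVar M (E i) g (isotypic_part i th)).
Proof.
move=> Wth; rewrite TVar_isotypic_part.
apply/Fm1Z/Fm1_sum => j; exact/Fm1Z/Fm1_pullback/Wth/coset_indexP.
Qed.

End FundamentalGroup.

Arguments isotypic_part {G N} gam {F n} E {V} M i th.

Theorem lemma3
  (F : fieldType) (two_neq0 : (2%:R : F) != 0) (V : lmodType F)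
  (G : Type) (mul : G -> G -> G) (one : G) (inv : G -> G)
  (HG : is_group mul one inv)
  (M : G -> V -> V) (HM : is_pullback_rep mul one M)
  (s : nat) (gam : 'I_(2 ^ s) -> G)
  (gam1 : forall j : 'I_(2 ^ s), nat_of_ord j = 0%N -> gam j = one)
  (gam_cosets : forall g : G,
      exists! j : 'I_(2 ^ s), pihat mul one inv (mul g (inv (gam j))))
  (n : nat) (E : 'I_n -> G -> bool)
  (E_hom : forall i, is_hom2 mul (E i))
  (E_enum : forall rho : G -> bool, is_hom2 mul rho ->
      exists! i : 'I_n, forall g, E i g = rho g)
  (k : nat) :
  (forall th : V,
     Fhat mul one inv M k th <->
     exists ths : 'I_n -> V,
       th = \sum_(i < n) ths i /\
       forall (i : 'I_n) (g : G), Fm1 mul one inv M k (TVar M (E i) g (ths i)))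
  /\
  (forall th : V, Fhat mul one inv M k th ->
     let ths := fun i : 'I_n =>
       ((2 ^ s)%:R : F)^-1 *:
         \sum_(j < 2 ^ s) (((-1) ^+ E i (gam j)) *: M (gam j) th) in
     th = \sum_(i < n) ths i /\
     forall (i : 'I_n) (g : G), Fm1 mul one inv M k (TVar M (E i) g (ths i))).
Proof.
pose j0 : 'I_(2 ^ s) := Ordinal (expn_gt0 2 s).
have gam_j0 : gam j0 = one by apply: gam1.
have N_neq0 : ((2 ^ s)%:R : F) != 0 by rewrite natrX expf_neq0.
have decomposition th : Fhat mul one inv M k th ->
    th = \sum_(i < n) isotypic_part gam E M i th /\
    forall i g, Fm1 mul one inv M k (TVar M (E i) g (isotypic_part gam E M i th)).
  move=> Wth; split=> [|i g]; last exact: TVar_isotypic_part_Fm1.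
  by rewrite (sum_isotypic_parts HG gam_cosets two_neq0 E_hom E_enum gam_j0 HM).
split=> th; last exact: decomposition.
split=> [/decomposition Wth | [ths [-> Wths]]].
  by exists (isotypic_part gam E M ^~ th).
exact: Fm1_of_twisted_decomposition.
Qed.
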